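(* Let $n$ be a positive integer that is a multiple of $3$. If the Aztec diamond $\operatorname{AD}(n)$ has a cover by L-trominoes, then $\operatorname{AD}(n+2)$ has a cover by L-trominoes.
   Context: A cell is a unit square $[i,i+1]\times[j,j+1]$ with $i,j\in\mathbb{Z}$. An L-tromino is a set of three cells equal to a $2\times 2$ block of cells with one cell removed. A cover of a region $R$ (a finite edge-connected set of cells) is a set of pairwise disjoint L-trominoes contained in $R$ whose union is $R$. The Aztec diamond $\operatorname{AD}(n)$ is the union of the cells $[a,a+1]\times[b,b+1]$, $a,b\in\mathbb{Z}$, lying completely inside $\{(x,y): |x|+|y|\le n+1\}$. *)

From Stdlib Require Import ZArith List Lia.
Open Scope Z_scope.

(* The cell [a,a+1] x [b,b+1] is represented by its lower-left corner (a,b). *)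
Definition cell := (Z * Z)%type.

Definition region := cell -> Prop.

Definition block (a b : Z) : region :=
  fun c => a <= fst c <= a + 1 /\ b <= snd c <= b + 1.

Definition is_L_tromino (T : region) : Prop :=
  exists a b i j : Z, (i = 0 \/ i = 1) /\ (j = 0 \/ j = 1) /\
    forall c, T c <-> (block a b c /\ c <> (a + i, b + j)).

(* The finite set is given as a list; pairwise
   disjointness is required for entries at distinct positions. *)
Definition cover (R : region) (F : list region) : Prop :=
  (forall T, In T F -> is_L_tromino T) /\
  (forall k l, (k < length F)%nat -> (l < length F)%nat -> k <> l ->
     forall c, ~ (nth k F (fun _ => False) c /\ nth l F (fun _ => False) c)) /\
  (forall T, In T F -> forall c, T c -> R c) /\
  (forall c, R c -> exists T, In T F /\ T c).

Definition has_cover (R : region) : Prop := exists F, cover R F.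

Definition in_diamond (n : nat) (x y : Z) : Prop :=
  Z.abs x + Z.abs y <= Z.of_nat n + 1.

(* Aztec diamond AD(n): cells lying completely inside {|x|+|y| <= n+1}.
   Since the region is convex, a unit square lies inside iff its four
   corners do. *)
Definition AD (n : nat) : region :=
  fun c => let (a, b) := c in
    in_diamond n a b /\ in_diamond n (a + 1) b /\
    in_diamond n a (b + 1) /\ in_diamond n (a + 1) (b + 1).

From Stdlib Require Import ZArith List Arith.
From Stdlib Require Import Lia Bool.
Open Scope Z_scope.

(* The ring AD(n+2) \ AD(n) has an explicit L-tromino cover.  Folding each quadrant onto
   the first one via u = max(|a|,|a+1|), v = max(|b|,|b+1|) (so u, v >= 1),
   AD(n) becomes u + v <= n + 1 and the ring becomes the two diagonals
   u + v = n + 2 and u + v = n + 3.  Group their cells by rows v = 3k+1,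
   3k+2, 3k+3: the three cells of row 3k+1 and of row 3k+2 on the outer
   diagonal form one L-tromino, and the remaining three cells form another.
   Since 3 divides n, the last group ends exactly at v = n + 2, u = 1, so no
   tromino crosses an axis, and the tiles of the four quadrants together
   with a cover of AD(n) cover AD(n+2). *)

Definition disjoint_family (F : list region) : Prop :=
  forall k l, (k < length F)%nat -> (l < length F)%nat -> k <> l ->
    forall c, ~ (nth k F (fun _ => False) c /\ nth l F (fun _ => False) c).

Lemma disjoint_family_app (F G : list region) :
  disjoint_family F -> disjoint_family G ->
  (forall T T' c, In T F -> In T' G -> T c -> T' c -> False) ->
  disjoint_family (F ++ G).
Proof.
  intros HF HG HFG k l Hk Hl Hkl c [Hck Hcl].
  rewrite length_app in Hk, Hl.
  destruct (Nat.lt_ge_cases k (length F)) as [Ek|Ek];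
  destruct (Nat.lt_ge_cases l (length F)) as [El|El].
  - rewrite app_nth1 in Hck, Hcl by assumption. exact (HF k l Ek El Hkl c (conj Hck Hcl)).
  - rewrite app_nth1 in Hck by assumption. rewrite app_nth2 in Hcl by assumption.
    apply (HFG _ _ c (nth_In F _ Ek) (nth_In G _ (n := (l - length F)%nat) ltac:(lia)) Hck Hcl).
  - rewrite app_nth2 in Hck by assumption. rewrite app_nth1 in Hcl by assumption.
    apply (HFG _ _ c (nth_In F _ El) (nth_In G _ (n := (k - length F)%nat) ltac:(lia)) Hcl Hck).
  - rewrite app_nth2 in Hck, Hcl by assumption.
    apply (HG (k - length F)%nat (l - length F)%nat) with c; [lia | lia | lia | tauto].
Qed.

Lemma disjoint_family_map {A : Type} (f : A -> region) (xs : list A) :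
  NoDup xs -> (forall x y c, In x xs -> In y xs -> f x c -> f y c -> x = y) ->
  disjoint_family (map f xs).
Proof.
  intros Hnd Hinj k l Hk Hl Hkl c [Hck Hcl].
  rewrite length_map in Hk, Hl.
  destruct xs as [|x0 xs']; [simpl in Hk; lia|].
  set (xs := x0 :: xs') in *.
  assert (Hnth : forall i, (i < length xs)%nat -> nth i (map f xs) (fun _ => False) = f (nth i xs x0)).
  { intros i Hi. rewrite (nth_indep _ _ (f x0)) by (rewrite length_map; exact Hi).
    apply map_nth. }
  rewrite Hnth in Hck, Hcl by assumption.
  apply Hkl, (proj1 (NoDup_nth xs x0) Hnd); try assumption.
  apply (Hinj _ _ c); auto using nth_In.
Qed.

Lemma cover_ext (R R' : region) (F : list region) :
  (forall c, R c <-> R' c) -> cover R F -> cover R' F.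
Proof.
  intros HR [HL [Hd [Hs Hc]]]. repeat split; auto.
  - intros T HT c HTc. apply HR, (Hs T HT c HTc).
  - intros c Hc'. apply Hc, HR, Hc'.
Qed.

Lemma cover_app (R S : region) (F G : list region) :
  (forall c, R c -> S c -> False) -> cover R F -> cover S G ->
  cover (fun c => R c \/ S c) (F ++ G).
Proof.
  intros HRS [HLF [HdF [HsF HcF]]] [HLG [HdG [HsG HcG]]]. split; [|split; [|split]].
  - intros T HT. apply in_app_or in HT. destruct HT; auto.
  - apply disjoint_family_app; auto.
    intros T T' c HT HT' Hc Hc'. exact (HRS c (HsF T HT c Hc) (HsG T' HT' c Hc')).
  - intros T HT c Hc. apply in_app_or in HT. destruct HT as [HT|HT]; eauto.
  - intros c [Hc|Hc]; [destruct (HcF c Hc) as [T HT] | destruct (HcG c Hc) as [T HT]];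
      exists T; split; try apply in_or_app; tauto.
Qed.

(* [(A, B, i, j)] codes the 2x2 block with lower-left cell (A, B) minus the
   cell (A + i, B + j). *)
Definition tromino (d : Z * Z * Z * Z) : region :=
  fun c => let '(A, B, i, j) := d in
    (A <= fst c <= A + 1 /\ B <= snd c <= B + 1) /\ ~ (fst c = A + i /\ snd c = B + j).

Lemma tromino_is_L (A B i j : Z) :
  (i = 0 \/ i = 1) -> (j = 0 \/ j = 1) -> is_L_tromino (tromino (A, B, i, j)).
Proof.
  intros HI HJ. exists A, B, i, j. do 2 (split; [assumption|]).
  intros [x y]. unfold tromino, block; simpl.
  split; intros [Hb Hne]; split; auto.
  - intros E. injection E. tauto.
  - intros [-> ->]. apply Hne. reflexivity.
Qed.

Definition tromino_code_eq_dec : forall x y : Z * Z * Z * Z, {x = y} + {x <> y}.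
Proof. repeat decide equality. Defined.

Section OwnerCover.

Variables (r : cell -> bool) (support : list cell) (own : cell -> Z * Z * Z * Z).

Hypothesis support_complete : forall c, r c = true -> In c support.
Hypothesis own_shape :
  forall c, r c = true -> let '(_, _, i, j) := own c in (i = 0 \/ i = 1) /\ (j = 0 \/ j = 1).
Hypothesis own_mem : forall c, r c = true -> tromino (own c) c.
Hypothesis own_closed :
  forall c c', r c = true -> tromino (own c) c' -> r c' = true /\ own c' = own c.

Let codes := nodup tromino_code_eq_dec (map own (filter r support)).

Let In_codes d : In d codes -> exists c, r c = true /\ d = own c.
Proof.
  unfold codes. rewrite nodup_In, in_map_iff. intros [c [<- Hc]].
  apply filter_In in Hc. exists c. tauto.
Qed.

Lemma cover_of_owner : has_cover (fun c => r c = true).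
Proof.
  exists (map tromino codes). split; [|split; [|split]].
  - intros T HT. apply in_map_iff in HT. destruct HT as [d [<- Hd]].
    destruct (In_codes d Hd) as [c [Hc ->]].
    pose proof (own_shape c Hc) as Hsh. destruct (own c) as [[[A B] i] j].
    apply tromino_is_L; tauto.
  - apply disjoint_family_map; [apply NoDup_nodup|].
    intros x y c Hx Hy Hcx Hcy.
    destruct (In_codes x Hx) as [cx [Hrx ->]], (In_codes y Hy) as [cy [Hry ->]].
    rewrite <- (proj2 (own_closed cx c Hrx Hcx)). exact (proj2 (own_closed cy c Hry Hcy)).
  - intros T HT c Hc. apply in_map_iff in HT. destruct HT as [d [<- Hd]].
    destruct (In_codes d Hd) as [c0 [Hr0 ->]]. exact (proj1 (own_closed c0 c Hr0 Hc)).
  - intros c Hc. exists (tromino (own c)). split; auto.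
    apply in_map, nodup_In, in_map, filter_In. auto.
Qed.

End OwnerCover.

Definition outer (a : Z) : Z := if 0 <=? a then a + 1 else - a.

Lemma AD_outer (n : nat) (a b : Z) : AD n (a, b) <-> outer a + outer b <= Z.of_nat n + 1.
Proof.
  unfold AD, in_diamond, outer.
  destruct (0 <=? a) eqn:Ea, (0 <=? b) eqn:Eb;
    rewrite ?Z.leb_le, ?Z.leb_gt in *; split; intros; lia.
Qed.

Lemma outer_pos (a : Z) : 1 <= outer a.
Proof. unfold outer. destruct (0 <=? a) eqn:E; rewrite ?Z.leb_le, ?Z.leb_gt in E; lia. Qed.

Definition in_ring (N : Z) (c : cell) : bool :=
  let (a, b) := c in (outer a + outer b =? N + 2) || (outer a + outer b =? N + 3).

Lemma in_ring_AD (n : nat) (c : cell) :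
  in_ring (Z.of_nat n) c = true <-> AD (n + 2) c /\ ~ AD n c.
Proof.
  destruct c as [a b]. rewrite !AD_outer. unfold in_ring.
  rewrite orb_true_iff, !Z.eqb_eq.
  pose proof (outer_pos a). pose proof (outer_pos b). split; intros; lia.
Qed.

Lemma AD_split (n : nat) (c : cell) : AD (n + 2) c <-> AD n c \/ (AD (n + 2) c /\ ~ AD n c).
Proof.
  destruct c as [a b]. rewrite !AD_outer.
  destruct (Z_le_gt_dec (outer a + outer b) (Z.of_nat n + 1)); split; intros; lia.
Qed.

Definition quadrant_tile (N u v : Z) : Z * Z * Z * Z :=
  if v mod 3 =? 1 then (N + 2 - v, v, 1, 1)
  else if v mod 3 =? 2 then
    (if u + v =? N + 3 then (N + 3 - v, v - 1, 1, 1) else (N + 1 - v, v, 0, 0))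
  else (N + 2 - v, v - 1, 0, 0).

(* Block coordinate [p] and missing offset [i] along one axis, unfolded back
   to the side of [a]; on the negative side the reflection u = -a reverses
   the block. *)
Definition unfold_coord (a p i : Z) : Z * Z :=
  if 0 <=? a then (p - 1, i) else (- p - 1, 1 - i).

Definition ring_tile (N : Z) (c : cell) : Z * Z * Z * Z :=
  let (a, b) := c in
  let '(p, q, i, j) := quadrant_tile N (outer a) (outer b) in
  let (A, i') := unfold_coord a p i in
  let (B, j') := unfold_coord b q j in (A, B, i', j').

Ltac unfold_ring :=
  unfold ring_tile, quadrant_tile, in_ring, unfold_coord, outer, tromino in *; simpl in *;
  repeat (match goal with
   | |- context [if ?x then _ else _] => let E := fresh "E" in destruct x eqn:E
   | H : context [if ?x then _ else _] |- _ => let E := fresh "E" in destruct x eqn:E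
   | H : (_ || _)%bool = true |- _ => apply orb_true_iff in H
   | H : (_ <=? _) = true |- _ => apply Z.leb_le in H
   | H : (_ <=? _) = false |- _ => apply Z.leb_gt in H
   | H : (_ =? _) = true |- _ => apply Z.eqb_eq in H
   | H : (_ =? _) = false |- _ => apply Z.eqb_neq in H
   | H : context [(_ =? _) = true] |- _ => rewrite Z.eqb_eq in H
   end; simpl in *).

Lemma ring_tile_shape (N : Z) (c : cell) :
  let '(_, _, i, j) := ring_tile N c in (i = 0 \/ i = 1) /\ (j = 0 \/ j = 1).
Proof. destruct c as [a b]. unfold_ring; lia. Qed.

Lemma ring_tile_mem (N : Z) (c : cell) :
  0 <= N -> in_ring N c = true -> tromino (ring_tile N c) c.
Proof. destruct c as [a b]. intros. unfold_ring; lia. Qed.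

Lemma ring_tile_in_ring (N : Z) (c c' : cell) :
  N mod 3 = 0 -> 0 <= N -> in_ring N c = true ->
  tromino (ring_tile N c) c' -> in_ring N c' = true.
Proof.
  destruct c as [a b], c' as [x y]. intros.
  unfold_ring; rewrite ?orb_true_iff, ?Z.eqb_eq; Z.div_mod_to_equations; lia.
Qed.

Lemma ring_tile_closed (N : Z) (c c' : cell) :
  N mod 3 = 0 -> 0 <= N -> in_ring N c = true ->
  tromino (ring_tile N c) c' -> ring_tile N c' = ring_tile N c.
Proof.
  destruct c as [a b], c' as [x y]. intros.
  unfold_ring; f_equal; try f_equal; try f_equal; Z.div_mod_to_equations; lia.
Qed.

Definition Z_range (lo : Z) (k : nat) : list Z := map (fun i => lo + Z.of_nat i) (seq 0 k).

Lemma In_Z_range (lo : Z) (k : nat) (x : Z) : lo <= x < lo + Z.of_nat k -> In x (Z_range lo k).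
Proof.
  intros H. apply in_map_iff. exists (Z.to_nat (x - lo)). split; [lia|].
  apply in_seq. lia.
Qed.

Definition ring_box (N : Z) : list cell :=
  let R := Z_range (- (N + 5)) (Z.to_nat (2 * N + 11)) in list_prod R R.

Lemma in_ring_box (N a b : Z) : 0 <= N -> in_ring N (a, b) = true -> In (a, b) (ring_box N).
Proof.
  intros HN H. apply in_prod_iff.
  unfold in_ring, outer in H. rewrite orb_true_iff, !Z.eqb_eq in H.
  destruct (0 <=? a) eqn:Ea, (0 <=? b) eqn:Eb;
    rewrite ?Z.leb_le, ?Z.leb_gt in *; split; apply In_Z_range; lia.
Qed.

Lemma ring_has_cover (N : Z) :
  N mod 3 = 0 -> 0 <= N -> has_cover (fun c => in_ring N c = true).
Proof.
  intros H3 HN.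
  apply (cover_of_owner (in_ring N) (ring_box N) (ring_tile N)).
  - intros [a b]. apply in_ring_box, HN.
  - intros c _. apply ring_tile_shape.
  - intros c. apply ring_tile_mem, HN.
  - intros c c' Hc Hc'. split; [eapply ring_tile_in_ring | eapply ring_tile_closed]; eauto.
Qed.

Theorem corollary2 (n : nat) (Hpos : (0 < n)%nat) (H3 : Nat.divide 3 n) :
  has_cover (AD n) -> has_cover (AD (n + 2)).
Proof.
  intros [F HF].
  assert (Hmod : Z.of_nat n mod 3 = 0).
  { destruct H3 as [k ->]. rewrite Nat2Z.inj_mul. apply Z_mod_mult. }
  destruct (ring_has_cover (Z.of_nat n) Hmod (Nat2Z.is_nonneg n)) as [G HG].
  exists (F ++ G).
  apply (cover_ext (fun c => AD n c \/ in_ring (Z.of_nat n) c = true)).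
  - intros c. rewrite in_ring_AD. symmetry. apply AD_split.
  - apply cover_app; auto.
    intros c Hc Hr. apply in_ring_AD in Hr. tauto.
Qed.
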